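(* For all integers $n\ge1$ and $0\le l\le n-1$, $$\frac{N_l^{(n)}}{n}=\frac{B_l^{(n+l)}}{n+l}.$$
   Context: The Narumi numbers $N_l^{(a)}$ are defined by $\left(\frac{\log(1+t)}{t}\right)^a=\sum_{l\ge0}N_l^{(a)}\frac{t^l}{l!}$. The Bernoulli numbers of order $a$ are $B_l^{(a)}=B_l^{(a)}(0)$, where $\left(\frac{t}{e^t-1}\right)^a e^{xt}=\sum_{l\ge0}B_l^{(a)}(x)\frac{t^l}{l!}$. *)

(* Formal power series over rat represented by coefficient
   functions nat -> rat (coefficient of t^k). *)
From HB Require Import structures.
From mathcomp Require Import all_boot all_order all_algebra.
Set Implicit Arguments. Unset Strict Implicit. Unset Printing Implicit Defensive.
Import Order.TTheory GRing.Theory Num.Theory.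
Local Open Scope ring_scope.

Definition fps := nat -> rat.

Definition fps_one : fps := fun k => if k == 0%N then 1 else 0.

Definition fps_mul (s u : fps) : fps :=
  fun k => \sum_(i < k.+1) s i * u (k - i)%N.

Definition fps_pow (s : fps) (a : nat) : fps := iter a (fps_mul s) fps_one.

(* multiplicative inverse of a series with nonzero constant term:
   list of the first n+1 coefficients *)
Fixpoint fps_inv_list (s : fps) (n : nat) : seq rat :=
  match n with
  | 0 => [:: (s 0%N)^-1]
  | m.+1 => let l := fps_inv_list s m in
            rcons l (- (s 0%N)^-1 * \sum_(i < m.+1) s i.+1 * nth 0 l (m - i)%N)
  end.

Definition fps_inv (s : fps) : fps := fun k => nth 0 (fps_inv_list s k) k.

Definition log1p_over_t : fps := fun k => (-1) ^+ k / (k.+1)%:R.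

Definition expm1_over_t : fps := fun k => 1 / ((k.+1)`!)%:R.

Definition t_over_expm1 : fps := fps_inv expm1_over_t.

(* Narumi numbers: (log(1+t)/t)^a = sum_l N_l^(a) t^l / l! *)
Definition narumi (l a : nat) : rat := (l`!)%:R * fps_pow log1p_over_t a l.

(* Bernoulli numbers of order a: B_l^(a) = B_l^(a)(0),
   (t/(e^t-1))^a = sum_l B_l^(a) t^l / l!  (e^{0 t} = 1) *)
Definition bernoulli_order (l a : nat) : rat := (l`!)%:R * fps_pow t_over_expm1 a l.

From HB Require Import structures.
From mathcomp Require Import all_boot all_order all_algebra.
From mathcomp Require Import ring.
Import Order.TTheory GRing.Theory Num.Theory.
Local Open Scope ring_scope.
Set Implicit Arguments. Unset Strict Implicit. Unset Printing Implicit Defensive.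

(* Write F = log(1+t)/t and G = t/(e^t-1).  Both satisfy first order
   differential equations, stated with the Euler operator D = t d/dt:
       (1 + t) (D F + F) = 1        and        D G = G - t G - G^2,
   the second one obtained from G E = 1 and D E + E = 1 + t E for
   E = (e^t-1)/t.  Raising to powers turns these into linear recurrences
   for a(l,n) = [t^l] F^n and b(l,m) = [t^l] G^m.  Combining them shows
   that the defect  d(l,n) = a(l,n) (n+l) - b(l,n+l) n  satisfies
       (n+l+1) d(l+1,n+1) = (n+1) d(l+1,n) - (n+l+1) d(l,n+1),
   and since d(0,n) = d(l+1,0) = 0, induction gives d = 0.

   All series are handled through their truncations modulo X^N, which are
   honest polynomials; congruence modulo X^N is the notion [eqmodX]. *)

Section Congruence.

Variable R : comNzRingType.
Implicit Types p q r : {poly R}.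

Definition eqmodX (N : nat) p q := exists r, p - q = r * 'X^N.

Lemma eqmodX_coef N p q : eqmodX N p q -> forall i, (i < N)%N -> p`_i = q`_i.
Proof. by move=> [r h] i hi; apply/eqP; rewrite -subr_eq0 -coefB h coefMXn hi. Qed.

Lemma coef_eqmodX N p q : (forall i, (i < N)%N -> p`_i = q`_i) -> eqmodX N p q.
Proof.
move=> h; exists (drop_poly N (p - q)).
rewrite -{1}(poly_take_drop N (p - q)).
suff -> : take_poly N (p - q) = 0 by rewrite add0r.
apply/polyP => i; rewrite coef_take_poly coef0 coefB.
by case: ifP => // hi; rewrite h // subrr.
Qed.

Lemma eqmodX_mull N r p q : eqmodX N p q -> eqmodX N (r * p) (r * q).
Proof. by move=> [a ha]; exists (r * a); rewrite -mulrA -ha; ring. Qed.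

Definition euler p : {poly R} := 'X * p^`().

Lemma coef_euler p i : (euler p)`_i = p`_i *+ i.
Proof. by rewrite /euler coefXM; case: i => [|i] /=; rewrite ?mulr0n ?coef_deriv. Qed.

Lemma eqmodX_euler N p q : eqmodX N p q -> eqmodX N (euler p) (euler q).
Proof. by move=> h; apply: coef_eqmodX => i hi; rewrite !coef_euler (eqmodX_coef h hi). Qed.

Lemma euler1 : euler 1 = 0.
Proof. by rewrite /euler derivC mulr0. Qed.

Lemma eulerM p q : euler (p * q) = euler p * q + p * euler q.
Proof. by rewrite /euler derivM; ring. Qed.

Lemma eulerX p n : euler (p ^+ n.+1) = n.+1%:R * p ^+ n * euler p.
Proof.
elim: n => [|n IH]; first by rewrite expr1 expr0 mulr1 mul1r.
by rewrite exprS eulerM IH exprS (natrD _ 1 n.+1); ring.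
Qed.

End Congruence.

Definition trunc (N : nat) (s : fps) : {poly rat} := \poly_(i < N) s i.

Lemma trunc_mul N s u i : (i < N)%N -> (trunc N (fps_mul s u))`_i = (trunc N s * trunc N u)`_i.
Proof.
move=> hi; rewrite coef_poly hi coefM /fps_mul; apply: eq_bigr => j _.
have hj : (j < N)%N by apply: leq_ltn_trans hi; rewrite -ltnS.
have hij : (i - j < N)%N by apply: leq_ltn_trans hi; rewrite leq_subr.
by rewrite !coef_poly hj hij.
Qed.

Lemma fps_pow_trunc N s a i : (i < N)%N -> fps_pow s a i = (trunc N s ^+ a)`_i.
Proof.
elim: a i => [|a IH] i hi; first by rewrite expr0 coef1 /fps_pow /= /fps_one; case: i {hi}.
rewrite exprS coefM /fps_pow /= /fps_mul; apply: eq_bigr => j _.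
have hj : (j < N)%N by apply: leq_ltn_trans hi; rewrite -ltnS.
have hij : (i - j < N)%N by apply: leq_ltn_trans hi; rewrite leq_subr.
by rewrite coef_poly hj -IH.
Qed.

(* The list defining fps_inv s is built by appending one coefficient at a time;
   the next two lemmas show that its entries do not depend on its length. *)
Lemma fps_inv_list_size s n : size (fps_inv_list s n) = n.+1.
Proof. by elim: n => [|n IH] //=; rewrite size_rcons IH. Qed.

Lemma fps_inv_list_nth s n i : (i <= n)%N -> nth 0 (fps_inv_list s n) i = fps_inv s i.
Proof.
elim: n i => [|n IH] i hi; first by move: hi; rewrite leqn0 => /eqP ->.
case: (ltngtP i n.+1) hi => // [hlt _ | -> _ //].
by rewrite /= nth_rcons fps_inv_list_size hlt IH // -ltnS.
Qed.

Lemma fps_invS s k :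
  fps_inv s k.+1 = - (s 0%N)^-1 * \sum_(i < k.+1) s i.+1 * fps_inv s (k - i)%N.
Proof.
rewrite {1}/fps_inv /= nth_rcons fps_inv_list_size ltnn eqxx; congr (_ * _).
by apply: eq_bigr => i _; rewrite fps_inv_list_nth // leq_subr.
Qed.

Lemma fps_mulV s : s 0%N != 0 -> forall k, fps_mul s (fps_inv s) k = fps_one k.
Proof.
move=> s0 [|k]; first by rewrite /fps_mul big_ord1 /fps_inv /= /fps_one /= mulfV.
rewrite /fps_mul big_ord_recl subn0 fps_invS /fps_one /=.
rewrite [X in _ + X](eq_bigr (fun i : 'I_k.+1 => s i.+1 * fps_inv s (k - i)%N)); last first.
  by move=> i _; rewrite /bump /= add1n subSS.
by rewrite mulrA mulrN mulfV // mulN1r addNr.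
Qed.

Lemma natrS_neq0 n : (n.+1%:R : rat) != 0.
Proof. by rewrite pnatr_eq0. Qed.

Lemma expm1_over_t0 : expm1_over_t 0%N = 1.
Proof. by rewrite /expm1_over_t /= divr1. Qed.

Lemma t_over_expm1_0 : t_over_expm1 0%N = 1.
Proof. by rewrite /t_over_expm1 /fps_inv /= expm1_over_t0 invr1. Qed.

Section Truncations.
Variable N : nat.
Local Notation F := (trunc N log1p_over_t).
Local Notation E := (trunc N expm1_over_t).
Local Notation G := (trunc N t_over_expm1).

Lemma trunc_GE : eqmodX N (G * E) 1.
Proof.
apply: coef_eqmodX => i hi; rewrite mulrC -trunc_mul // coef_poly hi /t_over_expm1.
rewrite fps_mulV ?expm1_over_t0 ?oner_neq0 //.
by rewrite /fps_one coef1; case: (i == 0%N).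
Qed.

(* (t E)' = e^t = 1 + t E, i.e. D E + E = 1 + t E. *)
Lemma ode_E : eqmodX N (euler E + E) (1 + 'X * E).
Proof.
apply: coef_eqmodX => i hi; rewrite coefD coef_euler coefD coef1 coefXM !coef_poly hi.
case: i hi => [|k] hk /=; first by rewrite mulr0n add0r expm1_over_t0 addr0.
rewrite ltnW // add0r /expm1_over_t -mulrSr -mulr_natr (factS k.+1) natrM.
have h1 := natrS_neq0 k.+1; have h2 : ((k.+1)`!%:R : rat) != 0 by rewrite pnatr_eq0 -lt0n fact_gt0.
field; rewrite h2 /=; by move: h1; rewrite -addn2 natrD addrC.
Qed.

(* (t F)' = 1/(1+t), i.e. (1 + t)(D F + F) = 1: the coefficients of D F + F
   are the alternating signs (-1)^k. *)
Lemma ode_F : eqmodX N ((1 + 'X) * (euler F + F)) 1.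
Proof.
have H k : (k < N)%N -> (euler F + F)`_k = (-1) ^+ k.
  move=> hk; rewrite coefD coef_euler coef_poly hk /log1p_over_t -mulrSr -mulr_natr.
  have h1 := natrS_neq0 k; field; by move: h1; rewrite -addn1 natrD addrC.
apply: coef_eqmodX => i hi; rewrite mulrDl mul1r coefD coefXM coef1 H //.
case: i hi => [|k] hk /=; first by rewrite addr0.
by rewrite H ?(ltnW hk) // exprS mulN1r addNr.
Qed.

(* The Riccati equation D G = G - t G - G^2, derived from G E = 1, D (G E) = 0
   and the equation of E. *)
Lemma ode_G : eqmodX N (euler G) (G - 'X * G - G ^+ 2).
Proof.
have [r1 h1] := trunc_GE; have [r2 h2] := eqmodX_euler trunc_GE; have [r3 h3] := ode_E.
exists (- euler G * r1 + G * r2 - G ^+ 2 * r3 + (G - 'X * G) * r1).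
have -> : euler G - (G - 'X * G - G ^+ 2) =
   - euler G * (G * E - 1) + G * (euler (G * E) - euler 1)
   - G ^+ 2 * ((euler E + E) - (1 + 'X * E)) + (G - 'X * G) * (G * E - 1).
  by rewrite eulerM euler1; ring.
by rewrite h1 h2 h3; ring.
Qed.

Lemma coef_euler_shift (p : {poly rat}) m k : (euler p + m%:R * p)`_k = p`_k * (k + m)%:R.
Proof. by rewrite coefD coef_euler mulr_natl coefMn -mulrnDr mulr_natr. Qed.

(* Recurrence for a(l,n) = [t^l] F^n, from (1+t)(D F^(n+1) + (n+1) F^(n+1)) = (n+1) F^n. *)
Lemma rec_F n l : (l.+1 < N)%N ->
  (F ^+ n.+1)`_l.+1 * (n + l).+2%:R + (F ^+ n.+1)`_l * (n + l).+1%:R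
  = (F ^+ n)`_l.+1 * n.+1%:R.
Proof.
move=> hl.
have ode_pow : eqmodX N ((1 + 'X) * (euler (F ^+ n.+1) + n.+1%:R * F ^+ n.+1))
                        (n.+1%:R * F ^+ n).
  have -> : (1 + 'X) * (euler (F ^+ n.+1) + n.+1%:R * F ^+ n.+1) =
            (n.+1%:R * F ^+ n) * ((1 + 'X) * (euler F + F)).
    by rewrite eulerX exprSr; move: (n.+1%:R : {poly rat}) => c; ring.
  by rewrite -[X in eqmodX _ _ X]mulr1; apply: eqmodX_mull; exact: ode_F.
have := eqmodX_coef ode_pow hl.
rewrite mulrDl mul1r coefD coefXM /= !coef_euler_shift mulr_natl coefMn.
by rewrite -[(F ^+ n)`_l.+1 *+ _]mulr_natr => <-; rewrite !addSn !addnS [(l + n)%N]addnC.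
Qed.

(* Recurrence for b(l,m) = [t^l] G^m, from D G^(m+1) = (m+1) G^m (G - t G - G^2). *)
Lemma rec_G m l : (l.+1 < N)%N ->
  (G ^+ m.+1)`_l.+1 * l.+1%:R
  = ((G ^+ m.+1)`_l.+1 - (G ^+ m.+1)`_l - (G ^+ m.+2)`_l.+1) * m.+1%:R.
Proof.
move=> hl.
have ode_pow : eqmodX N (euler (G ^+ m.+1))
                        (m.+1%:R * (G ^+ m.+1 - 'X * G ^+ m.+1 - G ^+ m.+2)).
  have -> : m.+1%:R * (G ^+ m.+1 - 'X * G ^+ m.+1 - G ^+ m.+2) =
            (m.+1%:R * G ^+ m) * (G - 'X * G - G ^+ 2).
    by rewrite !exprS; move: (m.+1%:R : {poly rat}) => c; ring.
  by rewrite eulerX; apply: eqmodX_mull; exact: ode_G.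
rewrite !mulr_natr; have := eqmodX_coef ode_pow hl.
by rewrite coef_euler mulr_natl coefMn !coefB coefXM.
Qed.

Definition defect l n := (F ^+ n)`_l * (n + l)%:R - (G ^+ (n + l))`_l * n%:R.

(* The defect satisfies a homogeneous recurrence: combine rec_F at (n,l) with
   rec_G at m = n + l. *)
Lemma defect_rec n l : (l.+1 < N)%N ->
  (n + l).+1%:R * defect l.+1 n.+1
  = n.+1%:R * defect l.+1 n - (n + l).+1%:R * defect l n.+1.
Proof.
move=> hl; have := rec_F n hl; have := rec_G (n + l) hl.
rewrite /defect !addSn !addnS.
set a := (F ^+ n.+1)`_l.+1; set a' := (F ^+ n.+1)`_l; set a'' := (F ^+ n)`_l.+1.
set b := (G ^+ (n + l).+2)`_l.+1; set b' := (G ^+ (n + l).+1)`_l.+1.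
set b'' := (G ^+ (n + l).+1)`_l.
move=> /eqP; rewrite -subr_eq0 => /eqP recG.
move=> /eqP; rewrite -subr_eq0 => /eqP recF.
apply/eqP; rewrite -subr_eq0; apply/eqP.
transitivity ((n + l).+1%:R * (a * (n + l).+2%:R + a' * (n + l).+1%:R - a'' * n.+1%:R)
  - n.+1%:R * (b' * l.+1%:R - (b' - b'' - b) * (n + l).+1%:R)); first by ring.
by rewrite recF recG !mulr0 subrr.
Qed.

Lemma defect_eq0 l n : (l < N)%N -> defect l n = 0.
Proof.
elim: l n => [|l IHl] n hl.
  rewrite /defect -!horner_coef0 !horner_exp !horner_coef0 !coef_poly hl.
  by rewrite t_over_expm1_0 /log1p_over_t divr1 !expr1n addn0 subrr.
elim: n => [|n IHn]; first by rewrite /defect expr0 coef1 mul0r mulr0 subrr.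
have /eqP := defect_rec n hl.
by rewrite IHn IHl 1?ltnW // !mulr0 subrr mulf_eq0 pnatr_eq0 => /eqP.
Qed.

End Truncations.

(* N_l^(n) / n = B_l^(n+l) / (n+l): the vanishing of the defect with N = l + 1. *)
Theorem corollary5 (n l : nat) (hn : (1 <= n)%N) (hl : (l <= n - 1)%N) :
  narumi l n / n%:R = bernoulli_order l (n + l) / (n + l)%:R.
Proof.
have /eqP := defect_eq0 n (ltnSn l); rewrite /defect subr_eq0 => /eqP key.
rewrite /narumi /bernoulli_order !(fps_pow_trunc _ _ (ltnSn l)) -!mulrA.
have n_neq0 : n%:R != 0 :> rat by rewrite pnatr_eq0 -lt0n.
have nl_neq0 : (n + l)%:R != 0 :> rat by rewrite pnatr_eq0 addn_eq0 negb_and -lt0n hn.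
by congr (_ * _); apply/eqP; rewrite eqr_div // key.
Qed.
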